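(* Fix $n\ge1$. The collection of all left Beth–Wocjan maximally entangled bases $\mathrm{LBW}(L,H)$, where $L$ ranges over Latin squares of order $n$ and $H$ over Hadamard matrices of order $n$, coincides with the collection of all quantum Latin square maximally entangled bases $B(Q,(H,H,\dots,H))$, where $Q$ ranges over Latin squares of order $n$ and $H$ over Hadamard matrices of order $n$ (the same Hadamard used for every index).
   Context: $\{\ket k\}_{k=0}^{n-1}$ is the computational basis of $\mathbb C^n$ and $\ket{k,p}=\ket k\otimes\ket p$. A quantum Latin square (QLS) of order $n$ is an $n\times n$ array of vectors of $\mathbb C^n$ in which every row and column is an orthonormal basis; the entry in column $i$, row $j$ is $\ket{Q_{ij}}$. A Latin square is a QLS whose entries are all computational basis states. A Hadamard matrix of order $n$ is an $n\times n$ complex matrix $H$ with $|H_{ij}|=1$ and $HH^\dagger=H^\dagger H=nI_n$. Given a QLS $Q$ and Hadamards $(H_j)_{j=0}^{n-1}$, $B(Q,(H_j))$ is the indexed family $A_{ij}=\frac1{\sqrt n}\sum_{k}\ket k\otimes\ket{Q_{kj}}\bra kH_j\ket i$, $i,j\in\{0,\dots,n-1\}$. Given a Latin square $L$ and a Hadamard $H$, $\mathrm{LBW}(L,H)$ is the indexed family $B_{ij}=\frac1{\sqrt n}\sum_{k,p=0}^{n-1}\ket{k,p}\,H_{ik}\,\langle L_{kp}|j\rangle$, $i,j\in\{0,\dots,n-1\}$. *)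

From mathcomp Require Import all_boot all_algebra.
From mathcomp Require Export complex reals.
Set Implicit Arguments. Unset Strict Implicit. Unset Printing Implicit Defensive.
Import GRing.Theory Num.Theory.
Local Open Scope ring_scope.

Section QLS.
Variables (C : numClosedFieldType) (n : nat).

Definition ket (k : 'I_n) : 'cV[C]_n := delta_mx k 0.

Definition braket (u v : 'cV[C]_n) : C := \sum_(i < n) (u i 0)^* * v i 0.

(* vectors of C^n (x) C^n are represented by their coordinate matrix:
   entry (k,p) is the coefficient of |k,p> = |k> (x) |p> *)
Definition tens (u v : 'cV[C]_n) : 'M[C]_n := \matrix_(k, p) (u k 0 * v p 0).

Definition is_onb (f : 'I_n -> 'cV[C]_n) : Prop :=
  (forall a b, braket (f a) (f b) = (a == b)%:R) /\
  row_full (\matrix_(a < n, i < n) f a i 0).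

(* quantum Latin square: Q i j is the entry in column i, row j;
   every row and every column is an orthonormal basis *)
Definition is_QLS (Q : 'I_n -> 'I_n -> 'cV[C]_n) : Prop :=
  (forall j, is_onb (fun i => Q i j)) /\ (forall i, is_onb (fun j => Q i j)).

Definition is_LatinSquare (Q : 'I_n -> 'I_n -> 'cV[C]_n) : Prop :=
  is_QLS Q /\ (forall i j, exists k, Q i j = ket k).

Definition adj (H : 'M[C]_n) : 'M[C]_n := (map_mx Num.conj H)^T.

Definition is_Hadamard (H : 'M[C]_n) : Prop :=
  (forall i j, `|H i j| = 1) /\ H *m adj H = n%:R%:M /\ adj H *m H = n%:R%:M.

(* B(Q,(H_j)) : A_ij = 1/sqrt n sum_k |k> (x) |Q_kj> <k|H_j|i> *)
Definition QLS_basis (Q : 'I_n -> 'I_n -> 'cV[C]_n) (Hs : 'I_n -> 'M[C]_n)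
    (i j : 'I_n) : 'M[C]_n :=
  (sqrtC n%:R)^-1 *: \sum_(k < n) (Hs j k i) *: tens (ket k) (Q k j).

(* LBW(L,H) : B_ij = 1/sqrt n sum_{k,p} |k,p> H_ik <L_kp|j> *)
Definition LBW (L : 'I_n -> 'I_n -> 'cV[C]_n) (H : 'M[C]_n)
    (i j : 'I_n) : 'M[C]_n :=
  (sqrtC n%:R)^-1 *:
    \sum_(k < n) \sum_(p < n) (H i k * braket (L k p) (ket j)) *: tens (ket k) (ket p).

End QLS.

(* A Latin square with computational-basis entries is an index function l with
   L k p = |l k p>.  Since <l k p | j> = [p == l_k^-1 j], the sum over p in
   LBW(L,H)_ij collapses to the single term p = l_k^-1 j, so
   LBW(L,H) = B(Q,(H^T,...,H^T)) with Q k j = |l_k^-1 j>, and inverting every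
   row of a Latin square gives again a Latin square.  Inverting rows is an
   involution and transposition preserves Hadamard matrices, which gives the
   converse inclusion. *)
From mathcomp Require Import all_boot all_algebra all_fingroup.
From mathcomp Require Import complex reals.
Import GRing.Theory Num.Theory.
Local Open Scope ring_scope.
Set Implicit Arguments. Unset Strict Implicit.

Definition latin_fun n (l : 'I_n -> 'I_n -> 'I_n) : Prop :=
  (forall j, injective (l^~ j)) /\ (forall i, injective (l i)).

Definition row_inverse n (l g : 'I_n -> 'I_n -> 'I_n) : Prop :=
  forall k p j, (l k p == j) = (p == g k j).

Section RowInverse.
Variables (n : nat) (l : 'I_n -> 'I_n -> 'I_n).

Lemma row_inverse_sym g : row_inverse l g -> row_inverse g l.
Proof. by move=> lg k p j; rewrite eq_sym -lg eq_sym. Qed.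

Lemma row_inverse_exists : latin_fun l -> exists2 g, latin_fun g & row_inverse l g.
Proof.
move=> [l_col l_row]; pose g k := invF (l_row k).
have lg : row_inverse l g.
  by move=> k p j; rewrite -{1}(f_invF (l_row k) j) (inj_eq (l_row k)).
exists g => //; split=> [j a b gab | i]; last exact: can_inj (f_invF (l_row i)).
by apply: (l_col (g a j)); rewrite /= {2}gab !f_invF.
Qed.

End RowInverse.

Lemma trmx_hadamard (C : numClosedFieldType) n (H : 'M[C]_n) :
  is_Hadamard H -> is_Hadamard H^T.
Proof.
move=> [H_unit [H_adjr H_adjl]].
have adjT : adj H^T = (adj H)^T by rewrite [RHS]trmxK /adj map_trmx trmxK.
split; first by move=> i j; rewrite mxE.
by rewrite adjT -!trmx_mul H_adjl H_adjr tr_scalar_mx; split.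
Qed.

Section KetLatinSquares.
Variables (C : numClosedFieldType) (n : nat).

Lemma ketE (a i : 'I_n) j : ket C a i j = (i == a)%:R.
Proof. by rewrite /ket mxE; case: j => [[]] //= ?; rewrite andbT. Qed.

Lemma braket_ket (a b : 'I_n) : braket (ket C a) (ket C b) = (a == b)%:R.
Proof.
rewrite /braket (bigD1 a) //= !ketE eqxx conjC1 mul1r eq_sym big1 ?addr0 //.
by move=> i /negbTE ia; rewrite !ketE ia conjC0 mul0r.
Qed.

Lemma ket_orthonormal_inj (f : 'I_n -> 'I_n) :
  (forall a b, braket (ket C (f a)) (ket C (f b)) = (a == b)%:R) -> injective f.
Proof.
move=> orth a b fab; have := orth a b; rewrite fab braket_ket eqxx.
by case: eqP => // _ /eqP; rewrite oner_eq0.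
Qed.

Lemma is_onb_ket (f : 'I_n -> 'I_n) : injective f -> is_onb (fun a => ket C (f a)).
Proof.
move=> f_inj; split=> [a b|]; first by rewrite braket_ket (inj_eq f_inj).
have -> : \matrix_(a < n, i < n) ket C (f a) i 0 = perm_mx (perm f_inj).
  by apply/matrixP => a i; rewrite !mxE permE andbT eq_sym.
by rewrite row_full_unit unitmx_perm.
Qed.

Lemma latin_square_ket (l : 'I_n -> 'I_n -> 'I_n) :
  latin_fun l -> is_LatinSquare (fun i j => ket C (l i j)).
Proof.
move=> [l_col l_row]; split; last by move=> i j; exists (l i j).
by split=> [j|i]; apply: is_onb_ket.
Qed.

Lemma latin_squareP (L : 'I_n -> 'I_n -> 'cV[C]_n) : is_LatinSquare L ->
  exists2 l, latin_fun l & forall i j, L i j = ket C (l i j).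
Proof.
move=> [[L_col L_row] L_ket].
have [l eL] := fin_all_exists (fun i => fin_all_exists (L_ket i)).
exists l => //; split=> [j|i]; apply: ket_orthonormal_inj => a b; rewrite -!eL.
  exact: (L_col j).1.
exact: (L_row i).1.
Qed.

Lemma LBW_QLS_basis (L Q : 'I_n -> 'I_n -> 'cV[C]_n) l g (H : 'M[C]_n) :
  (forall k p, L k p = ket C (l k p)) -> (forall k j, Q k j = ket C (g k j)) ->
  row_inverse l g -> forall i j, LBW L H i j = QLS_basis Q (fun _ => H^T) i j.
Proof.
move=> eL eQ lg i j; rewrite /LBW /QLS_basis; congr (_ *: _).
apply: eq_bigr => k _; rewrite mxE eQ (bigD1 (g k j)) //= big1 => [|p /negbTE pg].
  by rewrite eL braket_ket lg eqxx mulr1 addr0.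
by rewrite eL braket_ket lg pg mulr0 scale0r.
Qed.

End KetLatinSquares.

Local Open Scope complex_scope.

Theorem lemma24 (R : realType) (n : nat) (hn : (1 <= n)%N) :
  (forall (L : 'I_n -> 'I_n -> 'cV[R[i]]_n) (H : 'M[R[i]]_n),
     is_LatinSquare L -> is_Hadamard H ->
     exists (Q : 'I_n -> 'I_n -> 'cV[R[i]]_n) (H' : 'M[R[i]]_n),
       is_LatinSquare Q /\ is_Hadamard H' /\
       forall i j, LBW L H i j = QLS_basis Q (fun _ => H') i j) /\
  (forall (Q : 'I_n -> 'I_n -> 'cV[R[i]]_n) (H : 'M[R[i]]_n),
     is_LatinSquare Q -> is_Hadamard H ->
     exists (L : 'I_n -> 'I_n -> 'cV[R[i]]_n) (H' : 'M[R[i]]_n),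
       is_LatinSquare L /\ is_Hadamard H' /\
       forall i j, QLS_basis Q (fun _ => H) i j = LBW L H' i j).
Proof.
split=> [L H L_latin H_had | Q H Q_latin H_had].
  have [l l_latin eL] := latin_squareP L_latin.
  have [g g_latin lg] := row_inverse_exists l_latin.
  exists (fun k j => ket _ (g k j)), H^T.
  split; first exact: latin_square_ket.
  by split; [exact: trmx_hadamard | exact: LBW_QLS_basis lg].
have [q q_latin eQ] := latin_squareP Q_latin.
have [g g_latin qg] := row_inverse_exists q_latin.
exists (fun k j => ket _ (g k j)), H^T.
split; first exact: latin_square_ket.
split=> [|i j]; first exact: trmx_hadamard.
by rewrite -[in LHS](trmxK H) (LBW_QLS_basis _ _ eQ (row_inverse_sym qg)).
Qed.
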